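(* Let $F\colon\mathbb{R}^m\to\mathscr{P}(\mathbb{R}^n)$ be a multifunction definable in a polynomially bounded o-minimal structure, with closed graph $\Gamma_F$. Then for any $a\in\mathrm{dom}\,F$ and $y\in F(a)$ there exist a neighbourhood $U$ of $(a,y)$ and constants $C,\ell>0$ such that $$\|v-y\|\geq C\,d\big(x,(\Gamma_F)_y\big)^\ell,\qquad (x,v)\in\Gamma_F\cap U,$$ where $(\Gamma_F)_y=\{x\in\mathbb{R}^m\mid y\in F(x)\}$.
   Context: Definable multifunction: a definable set $\Gamma_F\subset\mathbb{R}^m\times\mathbb{R}^n$ with $F(x)=\{y\mid (x,y)\in\Gamma_F\}$, $\mathrm{dom}\,F=\{x\mid F(x)\neq\varnothing\}$. An o-minimal structure is polynomially bounded if every definable function $\mathbb{R}\to\mathbb{R}$ is bounded at $+\infty$ by some power $x^N$. *)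

(* classical reals. Points of R^k are lists of reals of length k. *)
From Stdlib Require Import Reals Lra List ClassicalEpsilon.
Import ListNotations.
Open Scope R_scope.

Definition edist (x z : list R) : R :=
  sqrt (fold_right Rplus 0 (map (fun p => (fst p - snd p) ^ 2) (combine x z))).

Definition is_glb (E : R -> Prop) (m : R) : Prop :=
  (forall r, E r -> m <= r) /\ (forall b, (forall r, E r -> b <= r) -> b <= m).

Definition Rinf (E : R -> Prop) : R :=
  epsilon (inhabits 0) (fun m => is_glb E m).

Definition dist_to (x : list R) (A : list R -> Prop) : R :=
  Rinf (fun r => exists z, A z /\ r = edist x z).

Definition rpow (t l : R) : R :=
  if Rle_dec t 0 then 0 else Rpower t l.

Definition closed_in (k : nat) (A : list R -> Prop) : Prop :=
  forall p, length p = k ->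
    (forall eps, 0 < eps -> exists q, A q /\ edist p q < eps) -> A p.

(* Intervals with possibly infinite endpoints (None = -oo / +oo). *)
Definition in_interval (iv : option R * option R) (r : R) : Prop :=
  (match fst iv with None => True | Some a => a < r end) /\
  (match snd iv with None => True | Some b => r < b end).

(* An o-minimal structure on the real field (van den Dries): Df n A means
   "A is a definable subset of R^n". *)
Record OMinimalStructure (Df : nat -> (list R -> Prop) -> Prop) : Prop := {
  om_sub : forall n A, Df n A -> forall x, A x -> length x = n;
  om_full : forall n, Df n (fun x => length x = n);
  om_compl : forall n A, Df n A -> Df n (fun x => length x = n /\ ~ A x);
  om_union : forall n A B, Df n A -> Df n B -> Df n (fun x => A x \/ B x);
  om_prodl : forall n A, Df n A -> Df (Datatypes.S n) (fun x => exists r z, x = r :: z /\ A z);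
  om_prodr : forall n A, Df n A -> Df (Datatypes.S n) (fun x => exists z r, x = z ++ [r] /\ A z);
  om_diag : forall n, (1 <= n)%nat ->
      Df n (fun x => length x = n /\ nth 0 x 0 = nth (n - 1)%nat x 0);
  om_proj : forall n A, Df (Datatypes.S n) A -> Df n (fun x => exists r, A (x ++ [r]));
  om_point : forall r, Df 1%nat (fun x => x = [r]);
  om_lt : Df 2%nat (fun x => exists a b, x = [a; b] /\ a < b);
  om_add : Df 3%nat (fun x => exists a b, x = [a; b; a + b]);
  om_mul : Df 3%nat (fun x => exists a b, x = [a; b; a * b]);
  om_ominimal : forall A, Df 1%nat A ->
      exists (I : list (option R * option R)) (P : list R),
        forall r, A [r] <-> ((exists iv, In iv I /\ in_interval iv r) \/ In r P)
}.

Definition polynomially_bounded (Df : nat -> (list R -> Prop) -> Prop) : Prop :=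
  forall f : R -> R, Df 2%nat (fun p => exists x, p = [x; f x]) ->
    exists (N : nat) (M : R), forall x, M < x -> Rabs (f x) <= x ^ N.

(* For s > 0 let phi(s) be the supremum of the radii t in (0, 1] such that every (x, v) in the
   graph with |x - a| < 1 and |v - y| < t satisfies d(x, (Gamma_F)_y) <= 1/s.  Because the graph
   is closed, a compactness argument shows phi(s) > 0.  The condition on (s, t) is first order,
   so s |-> 1/phi(s) is definable, and polynomial boundedness gives phi(s) >= s^-N for large s.
   Now let d = d(x, (Gamma_F)_y) > 0: if |v - y| < (d/2)^(N+1) <= phi(2/d), the defining
   property of phi at s = 2/d would give d <= d/2.  Hence |v - y| >= (d/2)^(N+1). *)

From Stdlib Require Import Reals List Lra Lia Rtopology.
From Stdlib Require Import ClassicalEpsilon Classical FunctionalExtensionality PropExtensionality.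
Import ListNotations.
Open Scope R_scope.

(** * First-order definability *)

Definition definable (Df : nat -> (list R -> Prop) -> Prop) (k : nat) (P : list R -> Prop) :=
  Df k (fun L => length L = k /\ P L).

Definition block (L : list R) (i p : nat) : list R := map (fun j => nth j L 0) (seq i p).

Lemma length_block L i p : length (block L i p) = p.
Proof. unfold block; now rewrite length_map, length_seq. Qed.

Lemma nth_block L i p j : (j < p)%nat -> nth j (block L i p) 0 = nth (i + j) L 0.
Proof.
  intros Hj. unfold block.
  rewrite nth_indep with (d' := (fun t => nth t L 0) 0%nat) by (rewrite length_map, length_seq; lia).
  rewrite (map_nth (fun t => nth t L 0)), seq_nth; auto.
Qed.

Lemma block_ext L1 L2 i p :
  (forall j, (j < p)%nat -> nth (i + j) L1 0 = nth (i + j) L2 0) -> block L1 i p = block L2 i p.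
Proof.
  intros H. apply nth_ext with 0 0; rewrite ?length_block; auto.
  intros j Hj. rewrite !nth_block; auto.
Qed.

Lemma block_app_r L z i p : (length L <= i)%nat -> block (L ++ z) i p = block z (i - length L) p.
Proof.
  intros H. apply nth_ext with 0 0; rewrite ?length_block; auto.
  intros j Hj. rewrite !nth_block by auto. rewrite app_nth2 by lia. f_equal; lia.
Qed.

Lemma block_app_l L z i p : (i + p <= length L)%nat -> block (L ++ z) i p = block L i p.
Proof. intros H. apply block_ext. intros j Hj. apply app_nth1; lia. Qed.

Lemma block_full z : block z 0 (length z) = z.
Proof.
  apply nth_ext with 0 0; rewrite ?length_block; auto.
  intros j Hj. now rewrite nth_block.
Qed.

Lemma block_app L z : block (L ++ z) (length L) (length z) = z.
Proof. rewrite block_app_r, Nat.sub_diag by lia. apply block_full. Qed.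

Lemma block_app_at P X W i p : length P = i -> length X = p -> block ((P ++ X) ++ W) i p = X.
Proof.
  intros <- <-. rewrite block_app_l by (rewrite length_app; lia). apply block_app.
Qed.

Lemma block_skipn L k p : length L = (k + p)%nat -> block L k p = skipn k L.
Proof.
  intros H. rewrite <- (firstn_skipn k L) at 1.
  rewrite block_app_r, length_firstn by (rewrite length_firstn; lia).
  replace (k - Nat.min k (length L))%nat with 0%nat by lia.
  replace p with (length (skipn k L)) by (rewrite length_skipn; lia). apply block_full.
Qed.

Inductive term := TVar (i : nat) | TConst (c : R) | TAdd (t u : term) | TMul (t u : term).

Fixpoint eval (L : list R) (t : term) : R :=
  match t with
  | TVar i => nth i L 0
  | TConst c => c
  | TAdd t u => eval L t + eval L u
  | TMul t u => eval L t * eval L u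
  end.

Fixpoint term_wf (k : nat) (t : term) : Prop :=
  match t with
  | TVar i => (i < k)%nat
  | TConst _ => True
  | TAdd t u | TMul t u => term_wf k t /\ term_wf k u
  end.

Lemma term_wf_mono k k' t : (k <= k')%nat -> term_wf k t -> term_wf k' t.
Proof. induction t; simpl; intuition lia. Qed.

Lemma eval_app L z t : term_wf (length L) t -> eval (L ++ z) t = eval L t.
Proof.
  induction t; simpl; intros H; [apply app_nth1; lia | reflexivity | ..];
    destruct H; f_equal; auto.
Qed.

Inductive formula :=
  | FLt (t u : term)
  | FMem (A : list R -> Prop) (ts : list term)
  | FNot (f : formula)
  | FOr (f g : formula)
  | FAnd (f g : formula)
  | FImp (f g : formula)
  | FEx (f : formula)
  | FAll (f : formula).

(* Variables are de Bruijn levels: a quantifier binds the next free position of [L]. *)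
Fixpoint sat (L : list R) (f : formula) : Prop :=
  match f with
  | FLt t u => eval L t < eval L u
  | FMem A ts => A (map (eval L) ts)
  | FNot f => ~ sat L f
  | FOr f g => sat L f \/ sat L g
  | FAnd f g => sat L f /\ sat L g
  | FImp f g => sat L f -> sat L g
  | FEx f => exists r, sat (L ++ [r]) f
  | FAll f => forall r, sat (L ++ [r]) f
  end.

Fixpoint formula_wf (Df : nat -> (list R -> Prop) -> Prop) (k : nat) (f : formula) : Prop :=
  match f with
  | FLt t u => term_wf k t /\ term_wf k u
  | FMem A ts => Df (length ts) A /\ Forall (term_wf k) ts
  | FNot f => formula_wf Df k f
  | FOr f g | FAnd f g | FImp f g => formula_wf Df k f /\ formula_wf Df k g
  | FEx f | FAll f => formula_wf Df (S k) f
  end.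

Definition FLe (t u : term) : formula := FNot (FLt u t).
Definition FEq (t u : term) : formula := FAnd (FLe t u) (FLe u t).
Definition FExN (j : nat) (f : formula) : formula := Nat.iter j FEx f.
Definition FAllN (j : nat) (f : formula) : formula := Nat.iter j FAll f.

Lemma sat_FLe L t u : sat L (FLe t u) <-> eval L t <= eval L u.
Proof. simpl. lra. Qed.

Lemma sat_FEq L t u : sat L (FEq t u) <-> eval L t = eval L u.
Proof. simpl. lra. Qed.

Lemma sat_FExN j : forall L f, sat L (FExN j f) <-> exists z, length z = j /\ sat (L ++ z) f.
Proof.
  induction j as [|j IH]; intros L f; simpl.
  - split; [exists []; now rewrite app_nil_r|].
    intros [[|r z] [Hz Hf]]; [now rewrite app_nil_r in Hf | discriminate].
  - split.
    + intros [r Hr]. apply IH in Hr. destruct Hr as [z [Hz Hf]].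
      exists (r :: z). rewrite <- app_assoc in Hf. simpl; auto.
    + intros [[|r z] [Hz Hf]]; [discriminate|]. exists r. apply IH.
      exists z. rewrite <- app_assoc. simpl in Hz; auto.
Qed.

Lemma sat_FAllN j : forall L f, sat L (FAllN j f) <-> forall z, length z = j -> sat (L ++ z) f.
Proof.
  induction j as [|j IH]; intros L f; simpl.
  - split; [intros Hf [|r z] Hz; [now rewrite app_nil_r | discriminate]|].
    intros H. rewrite <- (app_nil_r L). auto.
  - split.
    + intros H [|r z] Hz; [discriminate|]. specialize (H r). rewrite IH in H.
      specialize (H z ltac:(simpl in Hz; lia)). now rewrite <- app_assoc in H.
    + intros H r. apply IH. intros z Hz. rewrite <- app_assoc. apply H. simpl; lia.
Qed.

Lemma formula_wf_FExN Df j : forall k f, formula_wf Df (k + j) f -> formula_wf Df k (FExN j f).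
Proof.
  induction j as [|j IH]; intros k f H; simpl; [now rewrite Nat.add_0_r in H|].
  apply IH. now rewrite Nat.add_succ_comm.
Qed.

Lemma formula_wf_FAllN Df j : forall k f, formula_wf Df (k + j) f -> formula_wf Df k (FAllN j f).
Proof.
  induction j as [|j IH]; intros k f H; simpl; [now rewrite Nat.add_0_r in H|].
  apply IH. now rewrite Nat.add_succ_comm.
Qed.

Section Definability.

Variable Df : nat -> (list R -> Prop) -> Prop.
Hypothesis HS : OMinimalStructure Df.

Lemma Df_iff n (A B : list R -> Prop) : (forall x, A x <-> B x) -> Df n A -> Df n B.
Proof.
  intros H. replace B with A; auto.
  apply functional_extensionality; intro x; apply propositional_extensionality; apply H.
Qed.

Lemma definable_iff k (P Q : list R -> Prop) :
  (forall L, length L = k -> (P L <-> Q L)) -> definable Df k P -> definable Df k Q.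
Proof.
  intros H. apply Df_iff. intros L. split; intros [Hl HL]; split; auto; apply (H L Hl); auto.
Qed.

Lemma definable_of_Df k A : Df k A -> definable Df k A.
Proof.
  intros HA. generalize HA. apply Df_iff. intros L. split; [|tauto].
  intros HL; split; auto. eapply om_sub; eauto.
Qed.

Lemma definable_True k : definable Df k (fun _ => True).
Proof. apply (Df_iff k (fun L => length L = k)); [tauto | apply (om_full _ HS)]. Qed.

Lemma definable_not k P : definable Df k P -> definable Df k (fun L => ~ P L).
Proof. intros H. apply (om_compl _ HS) in H. revert H. apply Df_iff. intros L; tauto. Qed.

Lemma definable_or k P Q :
  definable Df k P -> definable Df k Q -> definable Df k (fun L => P L \/ Q L).
Proof. intros H1 H2. generalize (om_union _ HS _ _ _ H1 H2). apply Df_iff. intros L; tauto. Qed.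

Lemma definable_and k P Q :
  definable Df k P -> definable Df k Q -> definable Df k (fun L => P L /\ Q L).
Proof.
  intros H1 H2.
  generalize (definable_not _ _ (definable_or _ _ _ (definable_not _ _ H1) (definable_not _ _ H2))).
  apply definable_iff. intros L _. split; [intros H; split; apply NNPP; tauto | tauto].
Qed.

Lemma definable_imp k P Q :
  definable Df k P -> definable Df k Q -> definable Df k (fun L => P L -> Q L).
Proof.
  intros H1 H2. generalize (definable_or _ _ _ (definable_not _ _ H1) H2).
  apply definable_iff. intros L _. split; [tauto | intros H; destruct (classic (P L)); tauto].
Qed.

Lemma definable_ex k P : definable Df (S k) P -> definable Df k (fun L => exists r, P (L ++ [r])).
Proof.
  intros H. apply (om_proj _ HS) in H. revert H. apply Df_iff. intros L. split.
  - intros [r [Hl Hp]]. rewrite length_app in Hl; simpl in Hl. split; [lia | eauto].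
  - intros [Hl [r Hp]]. exists r; rewrite length_app; simpl; split; [lia | auto].
Qed.

Lemma definable_all k P : definable Df (S k) P -> definable Df k (fun L => forall r, P (L ++ [r])).
Proof.
  intros H. generalize (definable_not _ _ (definable_ex _ _ (definable_not _ _ H))).
  apply definable_iff. intros L _. split.
  - intros H' r. apply NNPP; intros Hn; apply H'; eauto.
  - intros H' [r Hr]; apply Hr, H'.
Qed.

Lemma definable_ex_block j : forall k P, definable Df (k + j) P ->
  definable Df k (fun L => exists z, length z = j /\ P (L ++ z)).
Proof.
  induction j as [|j IH]; intros k P H.
  - rewrite Nat.add_0_r in H. revert H. apply definable_iff. intros L _. split.
    + intros Hp; exists []; rewrite app_nil_r; auto.
    + intros [[|r z] [Hz Hp]]; [rewrite app_nil_r in Hp; auto | discriminate].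
  - rewrite Nat.add_succ_r in H. change (definable Df (S k + j) P) in H.
    generalize (definable_ex _ _ (IH _ _ H)). apply definable_iff. intros L _. split.
    + intros [r [z [Hz Hp]]]. exists (r :: z). rewrite <- app_assoc in Hp. simpl; auto.
    + intros [[|r z] [Hz Hp]]; [discriminate|]. exists r, z. rewrite <- app_assoc. simpl in Hz; auto.
Qed.

Lemma Df_cylinder_l p A (HA : Df p A) : forall k,
  Df (k + p) (fun L => exists pre z, length pre = k /\ L = pre ++ z /\ A z).
Proof.
  induction k as [|k IH].
  - revert HA. apply Df_iff. intros L; split.
    + intros HL; exists [], L; auto.
    + intros [[|r pre] [z [Hp [-> Hz]]]]; [auto | discriminate].
  - apply (om_prodl _ HS) in IH. revert IH. apply Df_iff. intros L; split.
    + intros [r [z [-> [pre [w [Hp [-> Hw]]]]]]]. exists (r :: pre), w; simpl; auto.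
    + intros [[|r pre] [z [Hp [-> Hz]]]]; [discriminate|].
      exists r, (pre ++ z); split; auto. exists pre, z; simpl in Hp; auto.
Qed.

Lemma Df_cylinder_r p A (HA : Df p A) : forall q,
  Df (p + q) (fun L => exists z post, length post = q /\ L = z ++ post /\ A z).
Proof.
  induction q as [|q IH].
  - rewrite Nat.add_0_r. revert HA. apply Df_iff. intros L; split.
    + intros HL; exists L, []; rewrite app_nil_r; auto.
    + intros [z [[|r post] [Hp [-> Hz]]]]; [rewrite app_nil_r; auto | discriminate].
  - rewrite Nat.add_succ_r. apply (om_prodr _ HS) in IH. revert IH. apply Df_iff. intros L; split.
    + intros [w [r [-> [z [post [Hp [-> Hz]]]]]]]. exists z, (post ++ [r]).
      rewrite length_app, <- app_assoc; simpl; split; [lia | auto].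
    + intros [z [post [Hp [-> Hz]]]].
      destruct (exists_last (l := post)) as [post' [r ->]]; [intros ->; discriminate|].
      exists (z ++ post'), r. rewrite app_assoc; split; auto.
      exists z, post'. rewrite length_app in Hp; simpl in Hp; split; [lia | auto].
Qed.

Lemma definable_nth_eq_lt K i j : (i < j < K)%nat -> definable Df K (fun L => nth i L 0 = nth j L 0).
Proof.
  intros Hij.
  generalize (Df_cylinder_r _ _ (Df_cylinder_l _ _ (om_diag _ HS (j - i + 1) ltac:(lia)) i) (K - j - 1)).
  replace (i + (j - i + 1) + (K - j - 1))%nat with K by lia.
  intros H. apply definable_of_Df in H. revert H. apply definable_iff. intros L HL. split.
  - intros [z [post [Hpost [-> [pre [w [Hpre [-> [Hw Hd]]]]]]]]]. rewrite !length_app in HL.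
    rewrite <- app_assoc, !(app_nth2 pre), !app_nth1 by lia. rewrite Hpre.
    replace (i - i)%nat with 0%nat by lia. replace (j - i)%nat with (j - i + 1 - 1)%nat by lia. exact Hd.
  - intros Heq. exists (firstn (j + 1) L), (skipn (j + 1) L). rewrite length_skipn, firstn_skipn.
    split; [lia|]. split; auto.
    exists (firstn i (firstn (j + 1) L)), (skipn i (firstn (j + 1) L)). rewrite firstn_skipn.
    rewrite length_firstn, length_skipn, length_firstn. split; [lia|]. split; auto. split; [lia|].
    rewrite !nth_skipn, !nth_firstn. replace (i + 0)%nat with i by lia.
    replace (i + (j - i + 1 - 1))%nat with j by lia.
    destruct (Nat.ltb_spec i (j + 1)); [|lia]. destruct (Nat.ltb_spec j (j + 1)); [|lia]. auto.
Qed.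

Lemma definable_nth_eq K i j : (i < K)%nat -> (j < K)%nat ->
  definable Df K (fun L => nth i L 0 = nth j L 0).
Proof.
  intros Hi Hj. destruct (Nat.lt_trichotomy i j) as [H|[->|H]].
  - apply definable_nth_eq_lt; lia.
  - eapply definable_iff; [|apply definable_True]. simpl; tauto.
  - eapply definable_iff; [|apply (definable_nth_eq_lt K j i); lia]. intros; split; auto.
Qed.

Lemma definable_preimage (A : list R -> Prop) p k (F : list R -> list R) :
  Df p A -> (forall L, length (F L) = p) -> (forall L z, length L = k -> F (L ++ z) = F L) ->
  definable Df (k + p) (fun L => block L k p = F L) -> definable Df k (fun L => A (F L)).
Proof.
  intros HA HF HFapp HE.
  assert (Hcyl : definable Df (k + p) (fun L => A (block L k p))).
  { generalize (definable_of_Df _ _ (Df_cylinder_l _ _ HA k)). apply definable_iff.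
    intros L HL. split.
    - intros [pre [z [Hpre [-> Hz]]]]. rewrite <- Hpre, <- (om_sub _ HS _ _ HA _ Hz).
      now rewrite block_app.
    - intros Ha. exists (firstn k L), (skipn k L). rewrite length_firstn, firstn_skipn.
      split; [lia|]. split; auto. now rewrite <- (block_skipn L k p). }
  generalize (definable_ex_block p k _ (definable_and _ _ _ Hcyl HE)). apply definable_iff.
  intros L HL. rewrite <- HL.
  assert (Hblk : forall z, length z = p -> block (L ++ z) (length L) p = z).
  { intros z Hz. rewrite <- Hz. apply block_app. }
  split.
  - intros [z [Hz [Ha Hb]]]. rewrite Hblk, HFapp in Hb by auto. subst z. now rewrite Hblk in Ha.
  - intros Ha. exists (F L). rewrite Hblk, HFapp; auto.
Qed.

Lemma definable_eval_block K (Q : term -> Prop)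
  (Hat : forall i t, (i < K)%nat -> Q t -> definable Df K (fun L => nth i L 0 = eval L t)) :
  forall ts off, Forall Q ts -> (off + length ts <= K)%nat ->
  definable Df K (fun L => forall j, (j < length ts)%nat ->
                             nth (off + j) L 0 = eval L (nth j ts (TConst 0))).
Proof.
  induction ts as [|t ts IH]; intros off HQ Hlen.
  - eapply definable_iff; [|apply definable_True]. intros L _; simpl; split; auto; intros _ j Hj; lia.
  - inversion HQ as [|? ? Ht Hts]; subst. simpl in Hlen.
    generalize (definable_and _ _ _ (Hat off t ltac:(lia) Ht) (IH (S off) Hts ltac:(lia))).
    apply definable_iff. intros L _. split.
    + intros [Ha Hb] [|j] Hj; [now rewrite Nat.add_0_r|].
      rewrite <- Nat.add_succ_comm. apply Hb. simpl in Hj; lia.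
    + intros H. split.
      * specialize (H 0%nat ltac:(simpl; lia)). now rewrite Nat.add_0_r in H.
      * intros j Hj. rewrite Nat.add_succ_comm. apply (H (S j)). simpl; lia.
Qed.

Lemma definable_subst_of (Q : term -> Prop) (A : list R -> Prop) (ts : list term) k :
  (forall i t, (i < k + length ts)%nat -> Q t ->
     definable Df (k + length ts) (fun L => nth i L 0 = eval L t)) ->
  Df (length ts) A -> Forall Q ts -> (forall t, Q t -> term_wf k t) ->
  definable Df k (fun L => A (map (eval L) ts)).
Proof.
  intros Hat HA HQ Hwf.
  apply (definable_preimage A (length ts) k (fun L => map (eval L) ts)); auto.
  - intros L; apply length_map.
  - intros L z HL. apply map_ext_in. intros t Ht. apply eval_app.
    rewrite HL. apply Hwf. rewrite Forall_forall in HQ; auto.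
  - generalize (definable_eval_block _ Q Hat ts k HQ ltac:(lia)). apply definable_iff.
    intros L HL. split.
    + intros H. apply nth_ext with 0 0; rewrite ?length_block, ?length_map; auto.
      intros j Hj. rewrite nth_block, H by auto.
      change 0 with (eval L (TConst 0)) at 2. now rewrite map_nth.
    + intros H j Hj. rewrite <- nth_block with (p := length ts), H by auto.
      change 0 with (eval L (TConst 0)) at 1. now rewrite map_nth.
Qed.

Lemma definable_subst_vars (A : list R -> Prop) (ts : list term) k :
  Df (length ts) A -> Forall (fun t => exists i, t = TVar i /\ (i < k)%nat) ts ->
  definable Df k (fun L => A (map (eval L) ts)).
Proof.
  intros HA HQ. apply (definable_subst_of (fun t => exists i, t = TVar i /\ (i < k)%nat) A ts k); auto.
  - intros i t Hi [i' [-> Hi']]. apply definable_nth_eq; lia.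
  - now intros t [i [-> Hi]].
Qed.

Lemma definable_eq_binop (op : R -> R -> R) (K j : nat) t u :
  Df 3 (fun x => exists a b, x = [a; b; op a b]) -> (j < K)%nat ->
  definable Df (S (S K)) (fun L => nth K L 0 = eval L t) ->
  definable Df (S (S K)) (fun L => nth (S K) L 0 = eval L u) ->
  term_wf K t -> term_wf K u ->
  definable Df K (fun L => nth j L 0 = op (eval L t) (eval L u)).
Proof.
  intros Hop Hj Ht Hu Hwt Hwu.
  assert (Hgraph : definable Df (S (S K))
            (fun L => exists a b, map (eval L) [TVar K; TVar (S K); TVar j] = [a; b; op a b])).
  { apply (definable_subst_vars (fun x => exists a b, x = [a; b; op a b])); auto.
    repeat constructor; eexists; split; eauto; lia. }
  generalize (definable_ex _ _ (definable_ex _ _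
                (definable_and _ _ _ Ht (definable_and _ _ _ Hu Hgraph)))).
  apply definable_iff. intros L HL. simpl.
  assert (Er1 : forall r1 r2, nth K ((L ++ [r1]) ++ [r2]) 0 = r1).
  { intros. rewrite <- app_assoc, <- HL. apply nth_middle. }
  assert (Er2 : forall r1 r2, nth (S K) ((L ++ [r1]) ++ [r2]) 0 = r2).
  { intros. replace (S K) with (length (L ++ [r1])) by (rewrite length_app; simpl; lia).
    apply nth_middle. }
  assert (Ej : forall r1 r2, nth j ((L ++ [r1]) ++ [r2]) 0 = nth j L 0).
  { intros. rewrite <- app_assoc. apply app_nth1; lia. }
  assert (Ewf : forall r1 r2 w, term_wf K w -> eval ((L ++ [r1]) ++ [r2]) w = eval L w).
  { intros. rewrite <- app_assoc. apply eval_app. now rewrite HL. }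
  split.
  - intros [r1 [r2 [Ha [Hb [a [b Hc]]]]]].
    rewrite Er1, Ewf in Ha by auto. rewrite Er2, Ewf in Hb by auto.
    rewrite Er1, Er2, Ej in Hc. injection Hc; intros -> -> ->. congruence.
  - intros He. exists (eval L t), (eval L u). rewrite Er1, Er2, Ej, !Ewf by auto.
    repeat split; auto. exists (eval L t), (eval L u). now rewrite He.
Qed.

Lemma definable_nth_eq_eval : forall t K j, (j < K)%nat -> term_wf K t ->
  definable Df K (fun L => nth j L 0 = eval L t).
Proof.
  induction t as [i|c|t IHt u IHu|t IHt u IHu]; intros K j Hj Hwf; simpl in Hwf.
  - apply definable_nth_eq; auto.
  - generalize (definable_subst_vars (fun x => x = [c]) [TVar j] K (om_point _ HS c)
                  ltac:(repeat constructor; eexists; split; eauto)).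
    apply definable_iff. intros L _. simpl. split; [intros H; injection H; auto | intros ->; auto].
  - destruct Hwf. apply (definable_eq_binop Rplus K j t u (om_add _ HS) Hj); auto;
      [apply IHt | apply IHu]; try lia; apply term_wf_mono with K; auto.
  - destruct Hwf. apply (definable_eq_binop Rmult K j t u (om_mul _ HS) Hj); auto;
      [apply IHt | apply IHu]; try lia; apply term_wf_mono with K; auto.
Qed.

Lemma definable_subst (A : list R -> Prop) (ts : list term) k :
  Df (length ts) A -> Forall (term_wf k) ts -> definable Df k (fun L => A (map (eval L) ts)).
Proof.
  intros HA Hwf. apply (definable_subst_of (term_wf k)); auto.
  intros i t Hi Ht. apply definable_nth_eq_eval; auto. apply term_wf_mono with k; auto; lia.
Qed.

Theorem definable_sat : forall f k, formula_wf Df k f -> definable Df k (fun L => sat L f).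
Proof.
  induction f as [t u|A ts|f IH|f IHf g IHg|f IHf g IHg|f IHf g IHg|f IH|f IH];
    intros k Hwf; simpl in Hwf |- *.
  - generalize (definable_subst _ [t; u] k (om_lt _ HS) ltac:(repeat constructor; tauto)).
    apply definable_iff. intros L _; simpl. split.
    + intros [a [b [E Hab]]]. now injection E as -> ->.
    + eauto.
  - apply definable_subst; tauto.
  - now apply definable_not, IH.
  - apply definable_or; [apply IHf | apply IHg]; tauto.
  - apply definable_and; [apply IHf | apply IHg]; tauto.
  - apply definable_imp; [apply IHf | apply IHg]; tauto.
  - now apply (definable_ex k (fun L => sat L f)), IH.
  - now apply (definable_all k (fun L => sat L f)), IH.
Qed.

End Definability.

(** * The admissible radii *)

Definition sqdist (p q : list R) : R :=
  fold_right Rplus 0 (map (fun pr => (fst pr - snd pr) ^ 2) (combine p q)).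

Lemma edist_sqdist x z : edist x z = sqrt (sqdist x z).
Proof. reflexivity. Qed.

Lemma sqdist_cons h T l L : sqdist (h :: T) (l :: L) = (h - l) ^ 2 + sqdist T L.
Proof. reflexivity. Qed.

Lemma sqdist_nonneg p : forall q, 0 <= sqdist p q.
Proof.
  induction p as [|h p IH]; intros [|l q]; try (unfold sqdist; simpl; lra).
  rewrite sqdist_cons. specialize (IH q). pose proof (pow2_ge_0 (h - l)). lra.
Qed.

Lemma sqdist_sym p : forall q, sqdist p q = sqdist q p.
Proof.
  induction p as [|h p IH]; intros [|l q]; try reflexivity.
  rewrite !sqdist_cons, IH. f_equal. ring.
Qed.

Lemma sqdist_app p1 : forall q1 p2 q2, length p1 = length q1 ->
  sqdist (p1 ++ p2) (q1 ++ q2) = sqdist p1 q1 + sqdist p2 q2.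
Proof.
  induction p1 as [|h p1 IH]; intros [|l q1] p2 q2 H; simpl in H; try discriminate.
  - unfold sqdist at 2; simpl. ring.
  - simpl. rewrite !sqdist_cons, IH by lia. ring.
Qed.

Lemma edist_lt_iff x z w : 0 < w -> edist x z < w <-> sqdist x z < w * w.
Proof.
  intros Hw. rewrite edist_sqdist. pose proof (sqdist_nonneg x z). split; intros Hlt.
  - apply sqrt_lt_0_alt. rewrite sqrt_square by lra. exact Hlt.
  - rewrite <- (sqrt_square w) by lra. apply sqrt_lt_1_alt; lra.
Qed.

Fixpoint sqdist_term (ts us : list term) : term :=
  match ts, us with
  | t :: ts', u :: us' =>
      let d := TAdd t (TMul (TConst (-1)) u) in TAdd (TMul d d) (sqdist_term ts' us')
  | _, _ => TConst 0
  end.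

Lemma eval_sqdist_term L ts : forall us,
  eval L (sqdist_term ts us) = sqdist (map (eval L) ts) (map (eval L) us).
Proof.
  induction ts as [|t ts IH]; intros [|u us]; simpl; auto.
  rewrite IH, sqdist_cons. simpl. ring.
Qed.

Lemma term_wf_sqdist_term k ts : forall us,
  Forall (term_wf k) ts -> Forall (term_wf k) us -> term_wf k (sqdist_term ts us).
Proof.
  induction ts as [|t ts IH]; intros [|u us] Hts Hus; simpl; auto.
  inversion Hts; inversion Hus; subst. repeat split; auto.
Qed.

Definition vars (i p : nat) : list term := map TVar (seq i p).
Definition consts (a : list R) : list term := map TConst a.

Lemma map_eval_vars L i p : map (eval L) (vars i p) = block L i p.
Proof. unfold vars, block. now rewrite map_map. Qed.

Lemma map_eval_consts L a : map (eval L) (consts a) = a.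
Proof. unfold consts. rewrite map_map. apply map_id. Qed.

Lemma vars_wf k i p : (i + p <= k)%nat -> Forall (term_wf k) (vars i p).
Proof.
  intros H. unfold vars. apply Forall_map, Forall_forall. intros j Hj. apply in_seq in Hj. simpl; lia.
Qed.

Lemma consts_wf k a : Forall (term_wf k) (consts a).
Proof. unfold consts. apply Forall_map, Forall_forall. now intros. Qed.

Lemma length_vars i p : length (vars i p) = p.
Proof. unfold vars; now rewrite length_map, length_seq. Qed.

Lemma length_consts a : length (consts a) = length a.
Proof. unfold consts; now rewrite length_map. Qed.

Section Admissible.

Variables (m n : nat) (G : list R -> Prop) (a y : list R).

(* [d(x, Gamma_y) <= 1/s], stated without roots or division so that it is first order in [s]. *)
Definition near_fibre (s : R) (x : list R) : Prop :=
  forall w, 1 < w * s -> exists z, length z = m /\ G (z ++ y) /\ sqdist x z < w * w.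

Definition admissible (s t : R) : Prop :=
  0 < t /\ t <= 1 /\ forall x v, length x = m -> length v = n -> G (x ++ v) ->
    sqdist x a < 1 -> sqdist v y < t * t -> near_fibre s x.

(* In an environment of length [k], [x] and [v] occupy the next [m + n] positions, followed by
   [w] and then [z]. *)
Definition near_fibre_formula (k : nat) (s : term) : formula :=
  let w := TVar (k + m + n) in
  FAll (FImp (FLt (TConst 1) (TMul w s))
    (FExN m (FAnd (FMem G (vars (S (k + m + n)) m ++ consts y))
                  (FLt (sqdist_term (vars k m) (vars (S (k + m + n)) m)) (TMul w w))))).

Definition admissible_formula (k : nat) (s t : term) : formula :=
  FAnd (FLt (TConst 0) t) (FAnd (FLe t (TConst 1))
    (FAllN m (FAllN n
      (FImp (FMem G (vars k m ++ vars (k + m) n))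
      (FImp (FLt (sqdist_term (vars k m) (consts a)) (TConst 1))
      (FImp (FLt (sqdist_term (vars (k + m) n) (consts y)) (TMul t t))
            (near_fibre_formula k s))))))).

Lemma admissible_formula_wf (Df : nat -> (list R -> Prop) -> Prop) k s t :
  Df (m + n)%nat G -> length y = n -> term_wf k s -> term_wf k t ->
  formula_wf Df k (admissible_formula k s t).
Proof.
  intros HG Hy Hs Ht.
  assert (Hwf : forall j u, term_wf k u -> (k <= j)%nat -> term_wf j u)
    by (intros; now apply term_wf_mono with k).
  repeat split; auto. apply formula_wf_FAllN, formula_wf_FAllN. repeat split.
  - now rewrite length_app, !length_vars.
  - apply Forall_app; split; apply vars_wf; lia.
  - apply term_wf_sqdist_term; [apply vars_wf; lia | apply consts_wf].
  - apply term_wf_sqdist_term; [apply vars_wf; lia | apply consts_wf].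
  - apply Hwf; auto; lia.
  - apply Hwf; auto; lia.
  - simpl; lia.
  - apply Hwf; auto; lia.
  - apply formula_wf_FExN. repeat split.
    + now rewrite length_app, length_vars, length_consts, Hy.
    + apply Forall_app; split; [apply vars_wf; lia | apply consts_wf].
    + apply term_wf_sqdist_term; apply vars_wf; lia.
    + simpl; lia.
    + simpl; lia.
Qed.

Lemma sat_near_fibre_formula L X V s :
  term_wf (length L) s -> length X = m -> length V = n ->
  sat ((L ++ X) ++ V) (near_fibre_formula (length L) s) <-> near_fibre (eval L s) X.
Proof.
  intros Hs HX HV. set (k := length L). set (E := (L ++ X) ++ V).
  assert (HE : length E = (k + m + n)%nat) by (unfold E; rewrite !length_app; lia).
  assert (Ew : forall w Z, nth (k + m + n) ((E ++ [w]) ++ Z) 0 = w).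
  { intros. rewrite <- app_assoc, <- HE. apply nth_middle. }
  assert (Ew' : forall w, nth (k + m + n) (E ++ [w]) 0 = w).
  { intros. rewrite <- HE. apply nth_middle. }
  assert (Es : forall w, eval (E ++ [w]) s = eval L s).
  { intros. unfold E. rewrite <- !app_assoc. now apply eval_app. }
  assert (Ex : forall w Z, map (eval ((E ++ [w]) ++ Z)) (vars k m) = X).
  { intros. unfold E. rewrite map_eval_vars, <- !app_assoc, (app_assoc L X).
    now apply block_app_at. }
  assert (Ez : forall w Z, length Z = m -> map (eval ((E ++ [w]) ++ Z)) (vars (S (k + m + n)) m) = Z).
  { intros w Z HZ. rewrite map_eval_vars.
    replace (S (k + m + n)) with (length (E ++ [w])) by (rewrite length_app, HE; simpl; lia).
    rewrite <- HZ. apply block_app. }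
  unfold near_fibre_formula, near_fibre. cbn [sat eval]. fold k E.
  split; intros H w; specialize (H w); rewrite Ew', Es in *; rewrite sat_FExN in *;
    intros Hw; destruct (H Hw) as [Z [HZ HZs]]; exists Z; cbn [sat eval] in *;
    rewrite map_app, eval_sqdist_term, Ex, Ez, map_eval_consts, Ew in *; tauto.
Qed.

Lemma sat_admissible_formula L k s t :
  length L = k -> term_wf k s -> term_wf k t ->
  sat L (admissible_formula k s t) <-> admissible (eval L s) (eval L t).
Proof.
  intros <- Hs Ht.
  assert (Et : forall X V, eval ((L ++ X) ++ V) t = eval L t).
  { intros. rewrite <- app_assoc. now apply eval_app. }
  assert (Ex : forall X V, length X = m -> map (eval ((L ++ X) ++ V)) (vars (length L) m) = X).
  { intros. rewrite map_eval_vars. now apply block_app_at. }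
  assert (Ev : forall X V, length X = m -> length V = n ->
             map (eval ((L ++ X) ++ V)) (vars (length L + m) n) = V).
  { intros X V HX HV. rewrite map_eval_vars, <- (app_nil_r (_ ++ V)).
    apply block_app_at; auto. rewrite length_app; lia. }
  unfold admissible_formula, admissible. cbn [sat eval]. rewrite sat_FLe, sat_FAllN. cbn [eval].
  split; intros [H0 [H1 H]]; (split; [lra|]); (split; [lra|]).
  - intros X V HX HV. specialize (H X HX). rewrite sat_FAllN in H. specialize (H V HV).
    cbn [sat eval] in H. rewrite map_app, !eval_sqdist_term, Ex, Ev, !map_eval_consts, Et,
      sat_near_fibre_formula in H by auto. exact H.
  - intros X HX. rewrite sat_FAllN. intros V HV. cbn [sat eval].
    rewrite map_app, !eval_sqdist_term, Ex, Ev, !map_eval_consts, Et, sat_near_fibre_formula by auto.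
    now apply H.
Qed.

End Admissible.

(** * Compactness *)

Lemma inv_succ_lt eps : 0 < eps -> exists N : nat, / (INR N + 1) < eps.
Proof.
  intros Heps. destruct (archimed_cor1 eps Heps) as [N [HN HN0]]. exists N.
  apply Rle_lt_trans with (/ INR N); auto.
  apply Rinv_le_contravar; [apply lt_0_INR; lia | lra].
Qed.

Lemma inv_succ_le j k : (j <= k)%nat -> / (INR k + 1) <= / (INR j + 1).
Proof.
  intros H. apply Rinv_le_contravar; [pose proof (pos_INR j); lra|]. apply le_INR in H; lra.
Qed.

Lemma inv_succ_pos k : 0 < / (INR k + 1).
Proof. apply Rinv_0_lt_compat. pose proof (pos_INR k); lra. Qed.

Definition strictly_increasing (ph : nat -> nat) : Prop := forall k, (ph k < ph (S k))%nat.

Lemma strictly_increasing_ge ph : strictly_increasing ph -> forall k, (k <= ph k)%nat.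
Proof. intros H k; induction k; [lia | specialize (H k); lia]. Qed.

Lemma strictly_increasing_lt ph : strictly_increasing ph -> forall i j, (i < j)%nat -> (ph i < ph j)%nat.
Proof.
  intros H i j Hij. induction j as [|j IH]; [lia|]. specialize (H j).
  destruct (Nat.eq_dec i j) as [->|]; [auto | specialize (IH ltac:(lia)); lia].
Qed.

Lemma strictly_increasing_comp ph1 ph2 :
  strictly_increasing ph1 -> strictly_increasing ph2 -> strictly_increasing (fun k => ph1 (ph2 k)).
Proof. intros H1 H2 k. now apply strictly_increasing_lt. Qed.

Lemma bolzano_weierstrass_subseq (u : nat -> R) c : (forall k, c - 1 <= u k <= c + 1) ->
  exists ph, strictly_increasing ph /\ exists l, Un_cv (fun k => u (ph k)) l.
Proof.
  intros Hb. destruct (Bolzano_Weierstrass u _ (compact_P3 (c - 1) (c + 1)) Hb) as [l Hl].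
  assert (Hnear : forall Nk : nat * nat,
             exists p, (fst Nk <= p)%nat /\ Rabs (u p - l) < / (INR (snd Nk) + 1)).
  { intros [N k]. destruct (Hl (disc l (mkposreal _ (inv_succ_pos k))) N) as [p Hp].
    - exists (mkposreal _ (inv_succ_pos k)). now intros z Hz.
    - exists p; exact Hp. }
  destruct (choice _ Hnear) as [g Hg].
  set (ph := fix ph (k : nat) : nat := match k with O => g (O, O) | S k' => g (S (ph k'), S k') end).
  exists ph. split.
  - intros k. simpl. destruct (Hg (S (ph k), S k)); simpl in *; lia.
  - exists l. intros eps Heps. destruct (inv_succ_lt eps Heps) as [N HN]. exists N. intros k Hk.
    assert (Hk' : Rabs (u (ph k) - l) < / (INR k + 1)) by (destruct k; apply Hg).
    unfold R_dist. pose proof (inv_succ_le _ _ Hk). lra.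
Qed.

Definition converges_to (X : nat -> list R) (L : list R) : Prop :=
  forall eps, 0 < eps -> exists N, forall k, (N <= k)%nat -> sqdist (X k) L < eps.

Lemma bounded_seq_convergent_subseq m : forall (X : nat -> list R) A, length A = m ->
  (forall k, length (X k) = m) -> (forall k, sqdist (X k) A < 1) ->
  exists ph, strictly_increasing ph /\ exists L, length L = m /\ converges_to (fun k => X (ph k)) L.
Proof.
  induction m as [|m IH]; intros X A HA HX Hb.
  - exists (fun k => k). split; [intros k; lia|]. exists []. split; auto.
    intros eps He. exists 0%nat. intros k _. now destruct (X k).
  - destruct A as [|a0 A]; [discriminate|]. simpl in HA.
    set (h := fun k => hd 0 (X k)). set (T := fun k => tl (X k)).
    assert (EX : forall k, X k = h k :: T k).
    { intros k. unfold h, T. specialize (HX k). destruct (X k); [discriminate|reflexivity]. }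
    assert (HT : forall k, length (T k) = m)
      by (intros k; specialize (HX k); rewrite EX in HX; simpl in HX; lia).
    assert (Hb' : forall k, (h k - a0) ^ 2 + sqdist (T k) A < 1)
      by (intros k; rewrite <- sqdist_cons, <- EX; auto).
    assert (Hh : forall k, a0 - 1 <= h k <= a0 + 1).
    { intros k. specialize (Hb' k). pose proof (sqdist_nonneg (T k) A). nra. }
    destruct (bolzano_weierstrass_subseq h a0 Hh) as [ph1 [Hph1 [l Hl]]].
    destruct (IH (fun k => T (ph1 k)) A ltac:(lia) (fun k => HT _)) as [ph2 [Hph2 [L [HL HcvL]]]].
    { intros k. specialize (Hb' (ph1 k)). pose proof (pow2_ge_0 (h (ph1 k) - a0)). lra. }
    exists (fun k => ph1 (ph2 k)). split; [now apply strictly_increasing_comp|].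
    exists (l :: L). split; [simpl; lia|].
    intros eps He. set (e := Rmin 1 (eps / 2)).
    assert (He1 : e <= 1) by apply Rmin_l. assert (He2 : e <= eps / 2) by apply Rmin_r.
    destruct (Hl e ltac:(apply Rmin_pos; lra)) as [N1 HN1].
    destruct (HcvL (eps / 2) ltac:(lra)) as [N2 HN2].
    exists (Nat.max N1 N2). intros k Hk. rewrite EX, sqdist_cons.
    assert (H1 : Rabs (h (ph1 (ph2 k)) - l) < e).
    { apply HN1. pose proof (strictly_increasing_ge _ Hph2 k). lia. }
    assert (H2 : sqdist (T (ph1 (ph2 k))) L < eps / 2) by (apply HN2; lia).
    assert (H3 : (h (ph1 (ph2 k)) - l) ^ 2 < eps / 2).
    { rewrite <- Rsqr_pow2, Rsqr_abs. unfold Rsqr. pose proof (Rabs_pos (h (ph1 (ph2 k)) - l)). nra. }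
    lra.
Qed.

Section Compactness.

Variables (m n : nat) (G : list R -> Prop) (a y : list R).
Hypotheses (HGcl : closed_in (m + n) G) (Ha : length a = m) (Hy : length y = n).

Lemma not_admissible_witness s t : 0 < s -> 0 < t <= 1 -> ~ admissible m n G a y s t ->
  exists x v, length x = m /\ length v = n /\ G (x ++ v) /\ sqdist x a < 1 /\ sqdist v y < t * t /\
    forall z, length z = m -> G (z ++ y) -> / (s * s) < sqdist x z.
Proof.
  intros Hs Ht Hna. apply NNPP; intros Hno. apply Hna.
  split; [lra|]. split; [lra|]. intros x v Hx Hv HG Hxa Hvy w Hw.
  apply NNPP; intros Hnz. apply Hno. exists x, v. repeat split; auto.
  intros z Hz HGz. apply Rnot_le_lt; intros Hle. apply Hnz. exists z. repeat split; auto.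
  assert (Hs2 : / (s * s) < w * w).
  { assert (0 < w) by nra. apply (Rmult_lt_reg_l (s * s)); [nra|]. rewrite Rinv_r by nra. nra. }
  lra.
Qed.

Lemma converges_to_subseq_of_inv_succ (V : nat -> list R) L ph :
  (forall k, sqdist (V k) L < / (INR k + 1)) -> strictly_increasing ph ->
  converges_to (fun k => V (ph k)) L.
Proof.
  intros HV Hph eps Heps. destruct (inv_succ_lt eps Heps) as [N HN]. exists N. intros k Hk.
  pose proof (inv_succ_le _ _ (Nat.le_trans _ _ _ Hk (strictly_increasing_ge _ Hph k))).
  specialize (HV (ph k)). lra.
Qed.

Lemma closed_in_limit X V xs vs : length xs = m -> length vs = n ->
  (forall k, length (X k) = m /\ length (V k) = n /\ G (X k ++ V k)) ->
  converges_to X xs -> converges_to V vs -> G (xs ++ vs).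
Proof.
  intros Hxs Hvs HXV HX HV. apply HGcl; [rewrite length_app; lia|]. intros eps Heps.
  destruct (HX (eps * eps / 2) ltac:(nra)) as [N1 HN1].
  destruct (HV (eps * eps / 2) ltac:(nra)) as [N2 HN2].
  set (k := Nat.max N1 N2). destruct (HXV k) as [HXk [HVk HGk]].
  exists (X k ++ V k). split; auto. apply edist_lt_iff; auto. rewrite sqdist_app by lia.
  rewrite (sqdist_sym xs), (sqdist_sym vs).
  specialize (HN1 k ltac:(lia)). specialize (HN2 k ltac:(lia)). lra.
Qed.

Lemma admissible_exists s : 0 < s -> exists t, admissible m n G a y s t.
Proof.
  intros Hs. apply NNPP; intros Hno.
  assert (Hseq : forall k, exists p : list R * list R,
    (length (fst p) = m /\ length (snd p) = n /\ G (fst p ++ snd p)) /\ sqdist (fst p) a < 1 /\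
    sqdist (snd p) y < / (INR k + 1) /\
    forall z, length z = m -> G (z ++ y) -> / (s * s) < sqdist (fst p) z).
  { intros k. pose proof (inv_succ_pos k).
    assert (Hk : / (INR k + 1) <= 1).
    { rewrite <- Rinv_1 at 2. apply Rinv_le_contravar; [lra | pose proof (pos_INR k); lra]. }
    destruct (not_admissible_witness s (/ (INR k + 1)) Hs ltac:(split; [auto | exact Hk])
      ltac:(intros Hadm; apply Hno; eauto)) as [x [v Hxv]].
    exists (x, v). simpl. intuition nra. }
  destruct (choice _ Hseq) as [p Hp].
  destruct (bounded_seq_convergent_subseq m (fun k => fst (p k)) a Ha (fun k => proj1 (proj1 (Hp k)))
              (fun k => proj1 (proj2 (Hp k)))) as [ph [Hph [xs [Hxs Hcv]]]].
  assert (HGxs : G (xs ++ y)).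
  { apply (closed_in_limit (fun k => fst (p (ph k))) (fun k => snd (p (ph k))) xs y); auto.
    - intros k. apply Hp.
    - apply (converges_to_subseq_of_inv_succ (fun k => snd (p k))); auto. intros k. apply Hp. }
  destruct (Hcv (/ (s * s)) ltac:(apply Rinv_0_lt_compat; nra)) as [N HN].
  specialize (HN N (le_n _)). destruct (Hp (ph N)) as [_ [_ [_ Hfar]]].
  specialize (Hfar xs Hxs HGxs). lra.
Qed.

End Compactness.

(** * The modulus phi and its polynomial lower bound *)

Definition is_sup (E : R -> Prop) (p : R) : Prop :=
  (forall t, E t -> t <= p) /\ (forall q, q < p -> exists t, E t /\ q < t).

Definition Rsup (E : R -> Prop) : R := epsilon (inhabits 0) (is_sup E).

Lemma is_sup_Rsup E : (exists t, E t) -> (exists b, forall t, E t -> t <= b) -> is_sup E (Rsup E).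
Proof.
  intros Hne Hb. unfold Rsup. apply epsilon_spec. destruct (completeness E Hb Hne) as [p [Hub Hl]].
  exists p. split; auto. intros q Hq. apply NNPP; intros Hn.
  enough (p <= q) by lra. apply Hl. intros t Ht. apply Rnot_lt_le. intros Hlt. apply Hn; eauto.
Qed.

Lemma is_sup_unique E p q : is_sup E p -> is_sup E q -> p = q.
Proof.
  intros [Hp Hp'] [Hq Hq']. destruct (Rtotal_order p q) as [H|[H|H]]; auto.
  - destruct (Hq' p H) as [t [Ht Hpt]]. specialize (Hp t Ht). lra.
  - destruct (Hp' q H) as [t [Ht Hqt]]. specialize (Hq t Ht). lra.
Qed.

Lemma Rinf_is_glb (E : R -> Prop) :
  (exists r, E r) -> (exists b, forall r, E r -> b <= r) -> is_glb E (Rinf E).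
Proof.
  intros [r Hr] [b Hb]. unfold Rinf. apply epsilon_spec.
  destruct (completeness (fun r => E (- r))) as [l [Hub Hl]].
  - exists (- b). intros t Ht. specialize (Hb _ Ht). lra.
  - exists (- r). now rewrite Ropp_involutive.
  - exists (- l). split.
    + intros t Ht. enough (- t <= l) by lra. apply Hub. now rewrite Ropp_involutive.
    + intros c Hc. enough (l <= - c) by lra. apply Hl. intros t Ht. specialize (Hc _ Ht). lra.
Qed.

Section Distance.

Variables (S : list R -> Prop) (x : list R).

Lemma dist_to_is_glb : (exists z, S z) ->
  is_glb (fun r => exists z, S z /\ r = edist x z) (dist_to x S).
Proof.
  intros [z Hz]. apply Rinf_is_glb; [exists (edist x z); eauto|].
  exists 0. intros r [z' [_ ->]]. apply sqrt_pos.
Qed.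

Lemma dist_to_le z : S z -> dist_to x S <= edist x z.
Proof. intros Hz. apply (dist_to_is_glb ltac:(eauto)); eauto. Qed.

Lemma dist_to_nonneg : (exists z, S z) -> 0 <= dist_to x S.
Proof. intros Hne. apply (dist_to_is_glb Hne). intros r [z [_ ->]]. apply sqrt_pos. Qed.

Lemma dist_to_le_of_approx u : (exists z, S z) ->
  (forall w, u < w -> exists z, S z /\ edist x z < w) -> dist_to x S <= u.
Proof.
  intros Hne H. apply Rnot_lt_le. intros Hlt.
  destruct (H ((u + dist_to x S) / 2) ltac:(lra)) as [z [Hz Hd]].
  pose proof (dist_to_le z Hz). lra.
Qed.

End Distance.

Section Modulus.

Variables (m n : nat) (G : list R -> Prop) (a y : list R).
Hypothesis Hadm : forall s, 0 < s -> exists t, admissible m n G a y s t.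

Definition modulus (s : R) : R := Rsup (admissible m n G a y s).

Definition inv_modulus (s : R) : R := if Rlt_dec 0 s then / modulus s else 0.

Lemma modulus_is_sup s : 0 < s -> is_sup (admissible m n G a y s) (modulus s).
Proof.
  intros Hs. apply is_sup_Rsup; [now apply Hadm|]. exists 1. now intros t [_ [Ht _]].
Qed.

Lemma modulus_pos s : 0 < s -> 0 < modulus s.
Proof.
  intros Hs. destruct (Hadm s Hs) as [t Ht].
  pose proof (proj1 (modulus_is_sup s Hs) t Ht). destruct Ht. lra.
Qed.

(* Positions: 0 = s, 1 = r, 2 = p (the supremum phi(s)), 3 and 4 = the bound variables. *)
Definition inv_modulus_formula : formula :=
  let s := TVar 0 in let r := TVar 1 in let p := TVar 2 in
  FOr (FAnd (FLe s (TConst 0)) (FEq r (TConst 0)))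
      (FAnd (FLt (TConst 0) s) (FEx (FAnd
        (FAll (FImp (admissible_formula m n G a y 4 s (TVar 3)) (FLe (TVar 3) p)))
        (FAnd (FAll (FImp (FLt (TVar 3) p)
                 (FEx (FAnd (admissible_formula m n G a y 5 s (TVar 4)) (FLt (TVar 3) (TVar 4))))))
              (FEq (TMul r p) (TConst 1)))))).

Lemma sat_inv_modulus_formula s r : sat [s; r] inv_modulus_formula <-> r = inv_modulus s.
Proof.
  assert (Hadm4 : forall p t, sat [s; r; p; t] (admissible_formula m n G a y 4 (TVar 0) (TVar 3))
                              <-> admissible m n G a y s t)
    by (intros; apply (sat_admissible_formula _ _ _ _ _ [s; r; p; t]); simpl; lia).
  assert (Hadm5 : forall p q t, sat [s; r; p; q; t] (admissible_formula m n G a y 5 (TVar 0) (TVar 4))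
                                <-> admissible m n G a y s t)
    by (intros; apply (sat_admissible_formula _ _ _ _ _ [s; r; p; q; t]); simpl; lia).
  unfold inv_modulus_formula. cbn [sat app]. rewrite sat_FLe, !sat_FEq.
  setoid_rewrite sat_FLe. setoid_rewrite sat_FEq. setoid_rewrite Hadm4. setoid_rewrite Hadm5.
  cbn [eval nth]. unfold inv_modulus. destruct (Rlt_dec 0 s) as [Hs|Hs].
  - pose proof (modulus_pos s Hs) as Hpos. split.
    + intros [[Hs' _]|[_ [p [Hup [Happ Hrp]]]]]; [lra|].
      rewrite (is_sup_unique _ p (modulus s) (conj Hup Happ) (modulus_is_sup s Hs)) in Hrp.
      field_simplify_eq; lra.
    + intros ->. right. split; auto. exists (modulus s).
      destruct (modulus_is_sup s Hs) as [Hup Happ]. repeat split; auto. field. lra.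
  - split; [intros [[_ ->]|[Hs' _]]; [auto | lra] | intros ->; left; lra].
Qed.

Lemma inv_modulus_formula_wf (Df : nat -> (list R -> Prop) -> Prop) :
  Df (m + n)%nat G -> length y = n -> formula_wf Df 2 inv_modulus_formula.
Proof.
  intros HG Hy. repeat split; simpl; try lia; apply admissible_formula_wf; simpl; auto; lia.
Qed.

Hypotheses (Ha : length a = m) (Hay : G (a ++ y)).

Let fibre : list R -> Prop := fun z => length z = m /\ G (z ++ y).

Lemma dist_to_fibre_le_of_near s x : 0 < s -> near_fibre m G y s x -> dist_to x fibre <= / s.
Proof.
  intros Hs Hnear. apply dist_to_le_of_approx; [exists a; now split|].
  intros w Hw. assert (Hw0 : 0 < w) by (pose proof (Rinv_0_lt_compat s Hs); lra).
  destruct (Hnear w) as [z [Hz [HGz Hxz]]].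
  - apply (Rmult_lt_compat_r s) in Hw; auto. now rewrite Rinv_l in Hw by lra.
  - exists z. split; [now split | now apply edist_lt_iff].
Qed.

Lemma dist_to_fibre_le_of_lt_modulus s x v : 0 < s -> length x = m -> length v = n ->
  G (x ++ v) -> sqdist x a < 1 -> edist v y < modulus s -> dist_to x fibre <= / s.
Proof.
  intros Hs Hx Hv HG Hxa Hvy.
  destruct (proj2 (modulus_is_sup s Hs) _ Hvy) as [t [[Ht0 [Ht1 Hadm_t]] Hvt]].
  apply dist_to_fibre_le_of_near; auto. apply (Hadm_t x v); auto.
  apply edist_lt_iff; auto.
Qed.

End Modulus.

Lemma power_law_of_modulus (mu : R -> R) (N : nat) (s0 d t : R) :
  0 < s0 -> 0 < mu s0 -> 0 <= d < 1 -> 0 <= t ->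
  (forall s, s0 < s -> / s ^ N <= mu s) ->
  (forall s, 0 < s -> t < mu s -> d <= / s) ->
  Rmin (/ 2 ^ S N) (mu s0) * d ^ S N <= t.
Proof.
  intros Hs0 Hmu Hd Ht Hpoly Hdist.
  assert (HC1 : Rmin (/ 2 ^ S N) (mu s0) <= / 2 ^ S N) by apply Rmin_l.
  assert (HC2 : Rmin (/ 2 ^ S N) (mu s0) <= mu s0) by apply Rmin_r.
  assert (HC0 : 0 < Rmin (/ 2 ^ S N) (mu s0))
    by (apply Rmin_pos; auto; apply Rinv_0_lt_compat, pow_lt; lra).
  assert (HdN : 0 <= d ^ S N <= 1)
    by (split; [apply pow_le; lra | rewrite <- (pow1 (S N)); apply pow_incr; lra]).
  destruct (Rle_or_lt (mu s0) t) as [Hmut|Htmu]; [nra|].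
  destruct (Req_dec d 0) as [->|Hd0]; [rewrite pow_i by lia; lra|].
  assert (Hhalf : (d / 2) ^ S N <= t).
  { apply Rnot_lt_le. intros Hlt.
    assert (Hds0 : d <= / s0) by auto.
    assert (Hs : s0 < 2 / d).
    { apply (Rmult_lt_reg_r d); [lra|]. unfold Rdiv. rewrite Rmult_assoc, Rinv_l by lra.
      apply (Rmult_le_compat_l s0) in Hds0; [|lra]. rewrite Rinv_r in Hds0; lra. }
    assert (Hpow : (d / 2) ^ S N <= / (2 / d) ^ N).
    { rewrite <- pow_inv, Rinv_div. simpl. pose proof (pow_le (d / 2) N ltac:(lra)).
      assert (d / 2 <= 1) by lra. nra. }
    assert (Hle : d <= / (2 / d)) by (apply Hdist; [apply Rdiv_lt_0_compat |]; try lra;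
                                        pose proof (Hpoly _ Hs); lra).
    rewrite Rinv_div in Hle. lra. }
  unfold Rdiv in Hhalf. rewrite Rpow_mult_distr, pow_inv in Hhalf. nra.
Qed.

Section PolynomiallyBounded.

Variable Df : nat -> (list R -> Prop) -> Prop.
Hypotheses (HS : OMinimalStructure Df) (Hpb : polynomially_bounded Df).
Variables (m n : nat) (G : list R -> Prop) (a y : list R).
Hypotheses (HG : Df (m + n)%nat G) (Hy : length y = n).
Hypothesis Hadm : forall s, 0 < s -> exists t, admissible m n G a y s t.

Lemma inv_modulus_graph_definable : Df 2 (fun p => exists s, p = [s; inv_modulus m n G a y s]).
Proof.
  generalize (definable_sat Df HS _ 2 (inv_modulus_formula_wf m n G a y Df HG Hy)).
  apply (Df_iff Df 2). intros L. split.
  - intros [HL Hsat]. destruct L as [|s [|r [|]]]; try discriminate.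
    exists s. now rewrite (proj1 (sat_inv_modulus_formula m n G a y Hadm s r) Hsat).
  - intros [s ->]. split; auto. now apply sat_inv_modulus_formula.
Qed.

Lemma modulus_lower_bound :
  exists (N : nat) s0, 0 < s0 /\ forall s, s0 < s -> / s ^ N <= modulus m n G a y s.
Proof.
  destruct (Hpb _ inv_modulus_graph_definable) as [N [M HNM]].
  exists N, (Rmax M 1). split; [pose proof (Rmax_r M 1); lra|].
  intros s Hs. assert (HMs : M < s) by (pose proof (Rmax_l M 1); lra).
  assert (Hs0 : 0 < s) by (pose proof (Rmax_r M 1); lra).
  pose proof (modulus_pos m n G a y Hadm s Hs0) as Hmu.
  specialize (HNM s HMs). unfold inv_modulus in HNM. destruct (Rlt_dec 0 s); [|lra].
  rewrite Rabs_pos_eq in HNM by (apply Rlt_le, Rinv_0_lt_compat; lra).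
  rewrite <- (Rinv_inv (modulus m n G a y s)). apply Rinv_le_contravar; auto.
  apply Rinv_0_lt_compat; lra.
Qed.

End PolynomiallyBounded.

Theorem mainTheorem5 (Df : nat -> (list R -> Prop) -> Prop)
  (HS : OMinimalStructure Df) (Hpb : polynomially_bounded Df)
  (m n : nat) (G : list R -> Prop)
  (HGdef : Df (m + n)%nat G) (HGcl : closed_in (m + n)%nat G)
  (a y : list R) (Ha : length a = m) (Hy : length y = n) (Hay : G (a ++ y)) :
  exists delta C l : R, 0 < delta /\ 0 < C /\ 0 < l /\
    forall x v : list R, length x = m -> length v = n -> G (x ++ v) ->
      edist x a < delta -> edist v y < delta ->
      C * rpow (dist_to x (fun z => length z = m /\ G (z ++ y))) l <= edist v y.
Proof.
  pose proof (admissible_exists m n G a y HGcl Ha Hy) as Hadm.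
  destruct (modulus_lower_bound Df HS Hpb m n G a y HGdef Hy Hadm) as [N [s0 [Hs0 Hpoly]]].
  pose proof (modulus_pos m n G a y Hadm s0 Hs0) as Hmu.
  exists 1, (Rmin (/ 2 ^ S N) (modulus m n G a y s0)), (INR (S N)).
  split; [lra|]. split; [apply Rmin_pos; auto; apply Rinv_0_lt_compat, pow_lt; lra|].
  split; [apply lt_0_INR; lia|].
  intros x v Hx Hv HG Hxa Hvy.
  set (fibre := fun z => length z = m /\ G (z ++ y)).
  assert (Hxa1 : sqdist x a < 1) by (apply edist_lt_iff in Hxa; lra).
  assert (Hd : 0 <= dist_to x fibre < 1).
  { split; [apply dist_to_nonneg; now exists a|].
    apply Rle_lt_trans with (edist x a); auto. now apply dist_to_le. }
  unfold rpow. destruct (Rle_dec (dist_to x fibre) 0); [rewrite Rmult_0_r; apply sqrt_pos|].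
  rewrite Rpower_pow by lra.
  apply power_law_of_modulus; auto; [apply sqrt_pos|].
  intros s Hs Hlt. now apply (dist_to_fibre_le_of_lt_modulus m n G a y Hadm Ha Hay s x v).
Qed.
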